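(* Let $M$ be a monoidal category and $C,D$ be $M$-actegories. Let $\Phi:[\mathit{Optic}_{C,D}^{op},\mathrm{Set}]\xrightarrow{\ \simeq\ }\mathit{Tamb}_{C,D}$ be the equivalence sending a presheaf $F$ to the Tambara module $(c,d)\mapsto F(c,d)$, whose functoriality in $f:c\to c'$ in $C$ and $g:d\to d'$ in $D$ is given by applying $F$ to the optic $\langle f;\lambda^{-1}_{c'}\mid\lambda_{d};g\rangle_I:(c,d')\to(c',d)$, and whose strength $F(c,d)\to F(m\odot c,m\odot d)$ is given by applying $F$ to the optic $\langle \mathrm{id}_{m\odot c}\mid\mathrm{id}_{m\odot d}\rangle_m:(m\odot c,m\odot d)\to(c,d)$. Let $Y:\mathit{Optic}_{C,D}\to[\mathit{Optic}_{C,D}^{op},\mathrm{Set}]$ be the Yoneda embedding. Then for every $x\in C$ and $u\in D$, $\Phi(Y(x,u))\cong R_x\otimes L_u$ in $\mathit{Tamb}_{C,D}$.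
   Context: $(M,\otimes,I,\lambda,a)$ is a monoidal category; an $M$-actegory is a category $C$ with a functor $\odot:M\times C\to C$ and coherent natural isomorphisms $\lambda_x:I\odot x\to x$, $a_{m,n,x}:(m\otimes n)\odot x\to m\odot(n\odot x)$. Composition is diagrammatic ($f;g$ = $f$ then $g$). $\mathit{Optic}_{C,D}$: objects are pairs $(x,u)$ with $x\in C,u\in D$; $\mathit{Optic}_{C,D}((x,u),(y,v))=\int^{m\in M}C(x,m\odot y)\times D(m\odot v,u)$, i.e. pairs $\langle\alpha\mid\beta\rangle_m$ with $\alpha:x\to m\odot y$, $\beta:m\odot v\to u$, modulo $\langle\alpha;(f\odot y)\mid\beta\rangle_m=\langle\alpha\mid(f\odot v);\beta\rangle_n$ for $f:n\to m$ in $M$. Composition: $\langle\alpha\mid\beta\rangle_m;\langle\alpha'\mid\beta'\rangle_n=\langle\alpha;(m\odot\alpha');a^{-1}_{m,n,z}\mid a_{m,n,w};(m\odot\beta');\beta\rangle_{m\otimes n}$ for a second optic $(y,v)\to(z,w)$; identities $\langle\lambda^{-1}_x\mid\lambda_u\rangle_I$. $\mathit{Tamb}_{C,D}$: functors $P:C^{op}\times D\to\mathrm{Set}$ with strength maps $P(c,d)\to P(m\odot c,m\odot d)$ natural in $c,d$, (di)natural in $m$, compatible with unitors/associators; morphisms are strength-preserving natural transformations. Composition of $P\in\mathit{Tamb}_{C,E}$, $Q\in\mathit{Tamb}_{E,D}$ is $(P\otimes Q)(c,d)=\int^{e}P(c,e)\times Q(e,d)$ with induced strength. $M$ is an $M$-actegory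 via $\otimes$. For $x\in C$, $R_x\in\mathit{Tamb}_{C,M}$ is $(c,n)\mapsto C(c,n\odot x)$ with strength $h\mapsto(m\odot h);a^{-1}_{m,n,x}$; for $u\in D$, $L_u\in\mathit{Tamb}_{M,D}$ is $(n,d)\mapsto D(n\odot u,d)$ with strength $h\mapsto a_{m,n,u};(m\odot h)$. *)

From Stdlib Require Import Relation_Operators ClassicalEpsilon.

Set Implicit Arguments.
Unset Strict Implicit.

(* Categories; composition is diagrammatic: f ;; g = "f then g".       *)
Record Category := {
  Ob :> Type;
  Hom : Ob -> Ob -> Type;
  idm : forall x, Hom x x;
  comp : forall x y z, Hom x y -> Hom y z -> Hom x z;
  comp_idl : forall x y (f : Hom x y), comp (idm x) f = f;
  comp_idr : forall x y (f : Hom x y), comp f (idm y) = f;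
  comp_assoc : forall x y z w (f : Hom x y) (g : Hom y z) (h : Hom z w),
      comp (comp f g) h = comp f (comp g h)
}.
Arguments Hom : clear implicits.
Arguments idm {_} _.
Arguments comp {_ _ _ _} _ _.
Notation "f ;; g" := (comp f g) (at level 40, left associativity).

Record Monoidal := {
  mcat :> Category;
  tens : mcat -> mcat -> mcat;
  tensH : forall a b c d, Hom mcat a b -> Hom mcat c d ->
                          Hom mcat (tens a c) (tens b d);
  munit : mcat;
  lam  : forall a, Hom mcat (tens munit a) a;
  lami : forall a, Hom mcat a (tens munit a);
  rho  : forall a, Hom mcat (tens a munit) a;
  rhoi : forall a, Hom mcat a (tens a munit);
  asc  : forall a b c, Hom mcat (tens (tens a b) c) (tens a (tens b c));
  asci : forall a b c, Hom mcat (tens a (tens b c)) (tens (tens a b) c);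
  tensH_id : forall a c, tensH (idm a) (idm c) = idm (tens a c);
  tensH_comp : forall a a' a'' c c' c'' (f : Hom mcat a a') (f' : Hom mcat a' a'')
      (g : Hom mcat c c') (g' : Hom mcat c' c''),
      tensH (f ;; f') (g ;; g') = tensH f g ;; tensH f' g';
  lam_iso1 : forall a, lam a ;; lami a = idm _;
  lam_iso2 : forall a, lami a ;; lam a = idm _;
  rho_iso1 : forall a, rho a ;; rhoi a = idm _;
  rho_iso2 : forall a, rhoi a ;; rho a = idm _;
  asc_iso1 : forall a b c, asc a b c ;; asci a b c = idm _;
  asc_iso2 : forall a b c, asci a b c ;; asc a b c = idm _;
  lam_nat : forall a b (f : Hom mcat a b), tensH (idm munit) f ;; lam b = lam a ;; f;
  rho_nat : forall a b (f : Hom mcat a b), tensH f (idm munit) ;; rho b = rho a ;; f;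
  asc_nat : forall a a' b b' c c' (f : Hom mcat a a') (g : Hom mcat b b')
      (h : Hom mcat c c'),
      tensH (tensH f g) h ;; asc a' b' c' = asc a b c ;; tensH f (tensH g h);
  pentagon : forall a b c d,
      asc (tens a b) c d ;; asc a b (tens c d)
      = tensH (asc a b c) (idm d) ;; asc a (tens b c) d ;; tensH (idm a) (asc b c d);
  triangle : forall a b,
      asc a munit b ;; tensH (idm a) (lam b) = tensH (rho a) (idm b)
}.
Arguments tens {_} _ _.
Arguments tensH {_ _ _ _ _} _ _.
Arguments munit {_}.
Arguments lam {_} _.
Arguments lami {_} _.
Arguments rho {_} _.
Arguments rhoi {_} _.
Arguments asc {_} _ _ _.
Arguments asci {_} _ _ _.

Record ActData (M : Monoidal) := {
  acat :> Category;
  act : M -> acat -> acat;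
  actH : forall m n x y, Hom M m n -> Hom acat x y -> Hom acat (act m x) (act n y);
  alam  : forall x, Hom acat (act munit x) x;
  alami : forall x, Hom acat x (act munit x);
  aasc  : forall m n x, Hom acat (act (tens m n) x) (act m (act n x));
  aasci : forall m n x, Hom acat (act m (act n x)) (act (tens m n) x)
}.
Arguments act {_} _ _ _.
Arguments actH {_} _ {_ _ _ _} _ _.
Arguments alam {_} _ _.
Arguments alami {_} _ _.
Arguments aasc {_} _ _ _ _.
Arguments aasci {_} _ _ _ _.

Definition IsActegory (M : Monoidal) (A : ActData M) : Prop :=
  (forall m x, actH A (idm m) (idm x) = idm (act A m x)) /\
  (forall m m' m'' x x' x'' (f : Hom M m m') (f' : Hom M m' m'')
      (g : Hom A x x') (g' : Hom A x' x''),
      actH A (f ;; f') (g ;; g') = actH A f g ;; actH A f' g') /\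
  (forall x, alam A x ;; alami A x = idm _) /\
  (forall x, alami A x ;; alam A x = idm _) /\
  (forall m n x, aasc A m n x ;; aasci A m n x = idm _) /\
  (forall m n x, aasci A m n x ;; aasc A m n x = idm _) /\
  (forall x y (g : Hom A x y), actH A (idm munit) g ;; alam A y = alam A x ;; g) /\
  (forall m m' n n' x x' (f : Hom M m m') (g : Hom M n n') (h : Hom A x x'),
      actH A (tensH f g) h ;; aasc A m' n' x'
      = aasc A m n x ;; actH A f (actH A g h)) /\
  (forall m n p x,
      aasc A (tens m n) p x ;; aasc A m n (act A p x)
      = actH A (asc m n p) (idm x) ;; aasc A m (tens n p) x
        ;; actH A (idm m) (aasc A n p x)) /\
  (forall m x, aasc A m munit x ;; actH A (idm m) (alam A x)
               = actH A (rho m) (idm x)) /\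
  (forall m x, aasc A munit m x ;; alam A (act A m x)
               = actH A (lam m) (idm x)).

Record Actegory (M : Monoidal) := {
  adata :> ActData M;
  alaws : IsActegory adata
}.

Definition selfAct (M : Monoidal) : ActData M := {|
  acat := mcat M;
  act := fun m n => tens m n;
  actH := fun m n x y f g => tensH f g;
  alam := fun x => lam x;
  alami := fun x => lami x;
  aasc := fun m n x => asc m n x;
  aasci := fun m n x => asci m n x |}.

(* Quotient of a type by the equivalence relation generated by R
   (sets are modelled by types, quotients by equivalence classes).     *)
Definition quot {T : Type} (R : T -> T -> Prop) : Type :=
  { P : T -> Prop | exists x, P = clos_refl_sym_trans T R x }.
Definition cls {T : Type} {R : T -> T -> Prop} (x : T) : quot R :=
  exist _ (clos_refl_sym_trans T R x) (ex_intro _ x eq_refl).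
Definition repr {T : Type} {R : T -> T -> Prop} (q : quot R) : T :=
  proj1_sig (constructive_indefinite_description _ (proj2_sig q)).

Section Optics.
Variables (M : Monoidal) (C D : ActData M).

(* representatives <α | β>_m of optics (x,u) -> (y,v) *)
Definition ORep (x : C) (u : D) (y : C) (v : D) : Type :=
  { m : M & (Hom C x (act C m y) * Hom D (act D m v) u)%type }.

Inductive ostep (x : C) (u : D) (y : C) (v : D) :
    ORep x u y v -> ORep x u y v -> Prop :=
  | ostep_intro (m n : M) (f : Hom M n m)
      (al : Hom C x (act C n y)) (be : Hom D (act D m v) u) :
      ostep (existT _ m (al ;; actH C f (idm y), be))
            (existT _ n (al, actH D f (idm v) ;; be)).

(* Optic_{C,D}((x,u),(y,v)) = ∫^m C(x, m⊙y) × D(m⊙v, u) *)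
Definition OHom (x : C) (u : D) (y : C) (v : D) : Type := quot (@ostep x u y v).

Definition rcomp {x : C} {u : D} {y : C} {v : D} {z : C} {w : D}
    (r1 : ORep x u y v) (r2 : ORep y v z w) : ORep x u z w :=
  let (m, p1) := r1 in let (al, be) := p1 in
  let (n, p2) := r2 in let (al', be') := p2 in
  existT _ (tens m n)
    (al ;; actH C (idm m) al' ;; aasci C m n z,
     aasc D m n w ;; actH D (idm m) be' ;; be).

Definition ocomp {x : C} {u : D} {y : C} {v : D} {z : C} {w : D}
    (o1 : OHom x u y v) (o2 : OHom y v z w) : OHom x u z w :=
  cls (rcomp (repr o1) (repr o2)).

Definition oid (x : C) (u : D) : OHom x u x u :=
  cls (existT _ munit (alami C x, alam D u)).

Record OPsh := {
  P_ob : C -> D -> Type;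
  P_map : forall (x : C) (u : D) (y : C) (v : D),
      OHom x u y v -> P_ob y v -> P_ob x u
}.

Definition Yon (y : C) (v : D) : OPsh := {|
  P_ob := fun x u => OHom x u y v;
  P_map := fun x u x' u' (o : OHom x u x' u') (h : OHom x' u' y v) => ocomp o h |}.

End Optics.
Arguments P_ob {_ _ _} _ _ _.
Arguments P_map {_ _ _} _ {_ _ _ _} _ _.

Record TambData (M : Monoidal) (A B : ActData M) := {
  T_ob : A -> B -> Type;
  T_map : forall (a a' : A) (b b' : B),
      Hom A a a' -> Hom B b b' -> T_ob a' b -> T_ob a b';
  T_str : forall (m : M) (a : A) (b : B),
      T_ob a b -> T_ob (act A m a) (act B m b)
}.
Arguments T_ob {_ _ _} _ _ _.
Arguments T_map {_ _ _} _ {_ _ _ _} _ _ _.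
Arguments T_str {_ _ _} _ _ {_ _} _.

Definition TambIso (M : Monoidal) (A B : ActData M) (P Q : TambData A B) : Prop :=
  exists (phi : forall a b, T_ob P a b -> T_ob Q a b)
         (psi : forall a b, T_ob Q a b -> T_ob P a b),
    (forall a b t, psi a b (phi a b t) = t) /\
    (forall a b t, phi a b (psi a b t) = t) /\
    (forall (a a' : A) (b b' : B) (f : Hom A a a') (g : Hom B b b') (t : T_ob P a' b),
        phi a b' (T_map P f g t) = T_map Q f g (phi a' b t)) /\
    (forall (m : M) (a : A) (b : B) (t : T_ob P a b),
        phi _ _ (T_str P m t) = T_str Q m (phi a b t)).

Definition Phi (M : Monoidal) (C D : ActData M) (F : OPsh C D) : TambData C D := {|
  T_ob := P_ob F;
  T_map := fun c c' d d' (f : Hom C c c') (g : Hom D d d') =>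
    P_map F (cls (existT (fun m : M => (Hom C c (act C m c') * Hom D (act D m d) d')%type)
                   munit (f ;; alami C c', alam D d ;; g)));
  T_str := fun m c d =>
    P_map F (cls (existT (fun n : M => (Hom C (act C m c) (act C n c)
                                       * Hom D (act D n d) (act D m d))%type)
                   m (idm (act C m c), idm (act D m d)))) |}.

(* Composition of Tambara modules: (P ⊗ Q)(a,b) = ∫^e P(a,e) × Q(e,b) *)
Section TTensor.
Variables (M : Monoidal) (A E B : ActData M) (P : TambData A E) (Q : TambData E B).

Definition TRep (a : A) (b : B) : Type := { e : E & (T_ob P a e * T_ob Q e b)%type }.

Inductive tstep (a : A) (b : B) : TRep a b -> TRep a b -> Prop :=
  | tstep_intro (e e' : E) (h : Hom E e' e) (p : T_ob P a e') (q : T_ob Q e b) :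
      tstep (existT _ e (T_map P (idm a) h p, q))
            (existT _ e' (p, T_map Q h (idm b) q)).

Definition TTensor : TambData A B := {|
  T_ob := fun a b => quot (@tstep a b);
  T_map := fun a a' b b' (f : Hom A a a') (g : Hom B b b') (t : quot (@tstep a' b)) =>
    let (e, pq) := repr t in let (p, q) := pq in
    cls (R := @tstep a b') (existT _ e (T_map P f (idm e) p, T_map Q (idm e) g q));
  T_str := fun m a b (t : quot (@tstep a b)) =>
    let (e, pq) := repr t in let (p, q) := pq in
    cls (R := @tstep (act A m a) (act B m b))
        (existT _ (act E m e) (T_str P m p, T_str Q m q)) |}.

End TTensor.

Definition Rx (M : Monoidal) (C : ActData M) (x : C) : TambData C (selfAct M) := {|
  T_ob := fun (c : C) (n : selfAct M) => Hom C c (act C n x);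
  T_map := fun c c' (n n' : selfAct M) (f : Hom C c c') (g : Hom (selfAct M) n n') (h : Hom C c' (act C n x)) =>
    f ;; h ;; actH C g (idm x);
  T_str := fun (m : M) c (n : selfAct M) (h : Hom C c (act C n x)) =>
    actH C (idm m) h ;; aasci C m n x |}.

Definition Lu (M : Monoidal) (D : ActData M) (u : D) : TambData (selfAct M) D := {|
  T_ob := fun (n : selfAct M) (d : D) => Hom D (act D n u) d;
  T_map := fun (n n' : selfAct M) d d' (f : Hom (selfAct M) n n') (g : Hom D d d') (h : Hom D (act D n' u) d) =>
    actH D f (idm u) ;; h ;; g;
  T_str := fun (m : M) (n : selfAct M) d (h : Hom D (act D n u) d) =>
    aasc D m n u ;; actH D (idm m) h |}.

(* Both sides are quotients of the same type of triples (e, p : c -> e⊙x, q : e⊙u -> d):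
   Optic((c,d),(x,u)) = ∫^e C(c, e⊙x) × D(e⊙u, d), and (R_x ⊗ L_u)(c,d) = ∫^e R_x(c,e) × L_u(e,d)
   is literally the same coend, its generating relation agreeing with that of optics up to
   identity laws. So re-reading a class for the other relation is a bijection. Functoriality
   and strength on both sides are precomposition of a representative with an optic: with
   <f;λ⁻¹ | λ;g>_I, which the unitor coherence turns into <f;p | q;g>_e, and with <id | id>_m,
   which gives <(m⊙p);a⁻¹ | a;(m⊙q)>_{m⊗e} on the nose. *)

From Stdlib Require Import Relation_Operators ClassicalEpsilon ProofIrrelevance
  FunctionalExtensionality PropExtensionality.

Set Implicit Arguments.
Unset Strict Implicit.

Section Quotient.
Variables (T : Type) (R : T -> T -> Prop).
Local Notation equiv := (clos_refl_sym_trans T R).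

Lemma cls_eq (a b : T) : equiv a b -> @cls T R a = @cls T R b.
Proof.
  intros Hab. apply subset_eq_compat.
  apply functional_extensionality; intros z; apply propositional_extensionality.
  split; intros Hz.
  - exact (rst_trans _ _ _ _ _ (rst_sym _ _ _ _ Hab) Hz).
  - exact (rst_trans _ _ _ _ _ Hab Hz).
Qed.

Lemma cls_repr (q : quot R) : cls (repr q) = q.
Proof.
  destruct q as [P HP]. unfold repr, cls. apply subset_eq_compat. simpl.
  symmetry. exact (proj2_sig (constructive_indefinite_description _ HP)).
Qed.

Lemma repr_cls (r : T) : equiv (repr (@cls T R r)) r.
Proof.
  pose proof (f_equal (@proj1_sig _ _) (cls_repr (@cls T R r))) as E.
  simpl in E. rewrite E. apply rst_refl.
Qed.

Lemma quot_ind (P : quot R -> Prop) : (forall r, P (cls r)) -> forall q, P q.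
Proof. intros H q. rewrite <- (cls_repr q). apply H. Qed.
End Quotient.

Lemma clos_rst_map (T T' : Type) (R : T -> T -> Prop) (R' : T' -> T' -> Prop) (f : T -> T') :
  (forall a b, R a b -> clos_refl_sym_trans T' R' (f a) (f b)) ->
  forall a b, clos_refl_sym_trans T R a b -> clos_refl_sym_trans T' R' (f a) (f b).
Proof.
  intros H a b Hab. induction Hab.
  - apply H; assumption.
  - apply rst_refl.
  - apply rst_sym; assumption.
  - eapply rst_trans; eassumption.
Qed.
Arguments clos_rst_map {T T' R R'} f _ {a b} _.

Section Requotient.
Variables (T : Type) (R R' : T -> T -> Prop).

Definition requot (q : quot R) : quot R' := cls (repr q).

Lemma requot_cls (r : T) :
  (forall a b, R a b -> clos_refl_sym_trans T R' a b) -> requot (cls r) = cls r.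
Proof.
  intros HR. apply cls_eq.
  apply (clos_rst_map (fun a => a) HR). apply repr_cls.
Qed.
End Requotient.

Lemma requotK (T : Type) (R R' : T -> T -> Prop) :
  (forall a b, R a b -> clos_refl_sym_trans T R' a b) ->
  (forall a b, R' a b -> clos_refl_sym_trans T R a b) ->
  forall q : quot R, requot R (requot R' q) = q.
Proof.
  intros HR HR'. apply quot_ind; intros r.
  rewrite !requot_cls by assumption. reflexivity.
Qed.

Section ActegoryLaws.
Variables (M : Monoidal) (A : Actegory M).

Lemma actH_idm m y : actH A (idm m) (idm y) = idm (act A m y).
Proof. destruct (alaws A) as (H & _). apply H. Qed.

Lemma actH_comp m m' m'' y y' y'' (f : Hom M m m') (f' : Hom M m' m'')
    (g : Hom A y y') (g' : Hom A y' y'') :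
  actH A (f ;; f') (g ;; g') = actH A f g ;; actH A f' g'.
Proof. destruct (alaws A) as (_ & H & _). apply H. Qed.

Lemma alamiK y : alami A y ;; alam A y = idm _.
Proof. destruct (alaws A) as (_ & _ & _ & H & _). apply H. Qed.

Lemma aascK m n y : aasc A m n y ;; aasci A m n y = idm _.
Proof. destruct (alaws A) as (_ & _ & _ & _ & H & _). apply H. Qed.

Lemma aasciK m n y : aasci A m n y ;; aasc A m n y = idm _.
Proof. destruct (alaws A) as (_ & _ & _ & _ & _ & H & _). apply H. Qed.

Lemma alam_nat y y' (g : Hom A y y') : actH A (idm munit) g ;; alam A y' = alam A y ;; g.
Proof. destruct (alaws A) as (_ & _ & _ & _ & _ & _ & H & _). apply H. Qed.

Lemma aasc_nat m m' n n' y y' (f : Hom M m m') (g : Hom M n n') (h : Hom A y y') :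
  actH A (tensH f g) h ;; aasc A m' n' y' = aasc A m n y ;; actH A f (actH A g h).
Proof. destruct (alaws A) as (_ & _ & _ & _ & _ & _ & _ & H & _). apply H. Qed.

Lemma aasc_alam m y : aasc A munit m y ;; alam A (act A m y) = actH A (lam m) (idm y).
Proof. destruct (alaws A) as (_ & _ & _ & _ & _ & _ & _ & _ & _ & _ & H). apply H. Qed.

Lemma aasci_nat m m' n n' y y' (f : Hom M m m') (g : Hom M n n') (h : Hom A y y') :
  aasci A m n y ;; actH A (tensH f g) h = actH A f (actH A g h) ;; aasci A m' n' y'.
Proof.
  rewrite <- (comp_idr (aasci A m n y ;; actH A (tensH f g) h)).
  rewrite <- (aascK m' n' y'), <- !comp_assoc, (comp_assoc (aasci A m n y)).
  rewrite aasc_nat, <- comp_assoc, aasciK, comp_idl. reflexivity.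
Qed.

Lemma aasci_actH_lam m y : aasci A munit m y ;; actH A (lam m) (idm y) = alam A (act A m y).
Proof. rewrite <- aasc_alam, <- comp_assoc, aasciK, comp_idl. reflexivity. Qed.

Lemma actH_interchange m n y y' (f : Hom M m n) (g : Hom A y y') :
  actH A f (idm y) ;; actH A (idm n) g = actH A (idm m) g ;; actH A f (idm y').
Proof. rewrite <- !actH_comp, !comp_idl, !comp_idr. reflexivity. Qed.
End ActegoryLaws.

Section Optics.
Variables (M : Monoidal) (C D : Actegory M).
Local Notation "a ≈ b" := (clos_refl_sym_trans _ (@ostep M C D _ _ _ _) a b)
  (at level 70).

Lemma ostep_of_eq (c : C) (d : D) (y : C) (v : D) (m n : M) (f : Hom M n m)
    (al : Hom C c (act C n y)) (al' : Hom C c (act C m y))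
    (be : Hom D (act D m v) d) (be' : Hom D (act D n v) d) :
  al' = al ;; actH C f (idm y) -> be' = actH D f (idm v) ;; be ->
  ostep (existT _ m (al', be)) (existT _ n (al, be')).
Proof. intros -> ->. constructor. Qed.

Lemma rcomp_ostep_l (c : C) (d : D) (y : C) (v : D) (z : C) (w : D)
    (a b : ORep c d y v) (s : ORep y v z w) :
  ostep a b -> rcomp a s ≈ rcomp b s.
Proof.
  intros H. destruct H as [k n h al be]. destruct s as [n' [al' be']].
  apply rst_step. apply ostep_of_eq with (f := tensH h (idm n')); simpl.
  - rewrite !comp_assoc, aasci_nat, actH_idm.
    rewrite <- (comp_assoc (actH C h (idm y))), actH_interchange, comp_assoc.
    reflexivity.
  - rewrite <- !comp_assoc, aasc_nat, actH_idm, !comp_assoc.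
    rewrite <- (comp_assoc (actH D h (idm (act D n' w)))), actH_interchange, comp_assoc.
    reflexivity.
Qed.

Lemma rcomp_ostep_r (c : C) (d : D) (y : C) (v : D) (z : C) (w : D)
    (r : ORep c d y v) (a b : ORep y v z w) :
  ostep a b -> rcomp r a ≈ rcomp r b.
Proof.
  intros H. destruct H as [k n h al be]. destruct r as [m [al0 be0]].
  apply rst_step. apply ostep_of_eq with (f := tensH (idm m) h); simpl.
  - rewrite !comp_assoc, aasci_nat.
    rewrite <- (comp_assoc (actH C (idm m) al)), <- actH_comp, comp_idl.
    reflexivity.
  - rewrite <- !comp_assoc, aasc_nat, !comp_assoc.
    rewrite <- (comp_assoc (actH D (idm m) (actH D h (idm w)))), <- actH_comp, comp_idl.
    reflexivity.
Qed.

Lemma rcomp_equiv (c : C) (d : D) (y : C) (v : D) (z : C) (w : D)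
    (a a' : ORep c d y v) (b b' : ORep y v z w) :
  a ≈ a' -> b ≈ b' -> rcomp a b ≈ rcomp a' b'.
Proof.
  intros Ha Hb. apply rst_trans with (rcomp a' b).
  - refine (clos_rst_map (fun a => rcomp a b) _ Ha).
    intros; apply rcomp_ostep_l; assumption.
  - refine (clos_rst_map (fun b => rcomp a' b) _ Hb).
    intros; apply rcomp_ostep_r; assumption.
Qed.

Lemma ocomp_cls (c : C) (d : D) (y : C) (v : D) (z : C) (w : D)
    (a : ORep c d y v) (b : ORep y v z w) :
  ocomp (cls a) (cls b) = cls (rcomp a b).
Proof. apply cls_eq, rcomp_equiv; apply repr_cls. Qed.

Definition rlift (c c' : C) (d d' : D) (f : Hom C c c') (g : Hom D d d') : ORep c d' c' d :=
  existT _ munit (f ;; alami C c', alam D d ;; g).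

Definition rstrength (m : M) (c : C) (d : D) : ORep (act C m c) (act D m d) c d :=
  existT _ m (idm (act C m c), idm (act D m d)).

Lemma rcomp_rlift (c c' : C) (d d' : D) (y : C) (v : D) (f : Hom C c c') (g : Hom D d d')
    (e : M) (p : Hom C c' (act C e y)) (q : Hom D (act D e v) d) :
  rcomp (rlift f g) (existT _ e (p, q)) ≈ existT _ e (f ;; p, q ;; g).
Proof.
  (* slide λ_e : I ⊗ e -> e through the coend *)
  apply rst_sym, rst_step. apply ostep_of_eq with (f := lam e); simpl.
  - rewrite !comp_assoc, aasci_actH_lam, alam_nat.
    rewrite <- (comp_assoc (alami C c')), alamiK, comp_idl. reflexivity.
  - rewrite !comp_assoc, <- (comp_assoc (actH D (idm munit) q)), alam_nat.
    rewrite <- !comp_assoc, aasc_alam. reflexivity.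
Qed.

Lemma rcomp_rstrength (m : M) (c : C) (d : D) (y : C) (v : D)
    (e : M) (p : Hom C c (act C e y)) (q : Hom D (act D e v) d) :
  rcomp (rstrength m c d) (existT _ e (p, q))
  = existT _ (tens m e) (actH C (idm m) p ;; aasci C m e y, aasc D m e v ;; actH D (idm m) q).
Proof. simpl. rewrite comp_idl, comp_idr. reflexivity. Qed.
End Optics.

Section YonedaTensor.
Variables (M : Monoidal) (C D : Actegory M) (x : C) (u : D).
Local Notation ostepx := (@ostep M C D _ _ x u).
Local Notation tstepx := (@tstep M C (selfAct M) D (Rx x) (Lu u) _ _).

Lemma ostep_tstep (c : C) (d : D) (a b : ORep c d x u) :
  ostepx a b -> clos_refl_sym_trans _ tstepx a b.
Proof.
  intros [m n f al be]. apply rst_step.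
  pose proof (@tstep_intro M C (selfAct M) D (Rx x) (Lu u) c d m n f al be) as T.
  simpl in T. rewrite comp_idl, comp_idr in T. exact T.
Qed.

Lemma tstep_ostep (c : C) (d : D) (a b : ORep c d x u) :
  tstepx a b -> clos_refl_sym_trans _ ostepx a b.
Proof.
  intros [m n f al be]. apply rst_step. simpl.
  rewrite comp_idl, comp_idr. constructor.
Qed.

Lemma oequiv_tequiv (c : C) (d : D) (a b : ORep c d x u) :
  clos_refl_sym_trans _ ostepx a b -> clos_refl_sym_trans _ tstepx a b.
Proof. apply (clos_rst_map (fun a => a)), ostep_tstep. Qed.

Lemma tequiv_oequiv (c : C) (d : D) (a b : ORep c d x u) :
  clos_refl_sym_trans _ tstepx a b -> clos_refl_sym_trans _ ostepx a b.
Proof. apply (clos_rst_map (fun a => a)), tstep_ostep. Qed.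

Lemma TTensor_map_repr (c c' : C) (d d' : D) (f : Hom C c c') (g : Hom D d d')
    (t : quot tstepx) :
  T_map (TTensor (Rx x) (Lu u)) f g t = cls (rcomp (rlift f g) (repr t)).
Proof.
  cbn [T_map TTensor Rx Lu selfAct actH].
  destruct (repr t) as [e [p q]].
  rewrite !actH_idm, comp_idr, comp_idl.
  apply cls_eq, oequiv_tequiv, rst_sym, rcomp_rlift.
Qed.

Lemma TTensor_str_repr (m : M) (c : C) (d : D) (t : quot tstepx) :
  T_str (TTensor (Rx x) (Lu u)) m t = cls (rcomp (rstrength m c d) (repr t)).
Proof.
  cbn [T_str TTensor Rx Lu selfAct actH].
  destruct (repr t) as [e [p q]].
  rewrite rcomp_rstrength. reflexivity.
Qed.

Lemma tcls_rcomp_repr (c c' : C) (d d' : D) (a : ORep c d c' d') (r : ORep c' d' x u) :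
  @cls _ tstepx (rcomp a (repr (@cls _ tstepx r))) = cls (rcomp a r).
Proof.
  apply cls_eq, oequiv_tequiv, rcomp_equiv; [apply rst_refl|].
  apply tequiv_oequiv, repr_cls.
Qed.

Lemma TTensor_map_cls (c c' : C) (d d' : D) (f : Hom C c c') (g : Hom D d d')
    (r : ORep c' d x u) :
  T_map (TTensor (Rx x) (Lu u)) f g (cls r) = cls (rcomp (rlift f g) r).
Proof. rewrite TTensor_map_repr. apply tcls_rcomp_repr. Qed.

Lemma TTensor_str_cls (m : M) (c : C) (d : D) (r : ORep c d x u) :
  T_str (TTensor (Rx x) (Lu u)) m (cls r) = cls (rcomp (rstrength m c d) r).
Proof. rewrite TTensor_str_repr. apply tcls_rcomp_repr. Qed.

Lemma Phi_Yon_map_cls (c c' : C) (d d' : D) (f : Hom C c c') (g : Hom D d d')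
    (r : ORep c' d x u) :
  T_map (Phi (Yon x u)) f g (cls r) = cls (rcomp (rlift f g) r).
Proof. apply ocomp_cls. Qed.

Lemma Phi_Yon_str_cls (m : M) (c : C) (d : D) (r : ORep c d x u) :
  T_str (Phi (Yon x u)) m (cls r) = cls (rcomp (rstrength m c d) r).
Proof. apply ocomp_cls. Qed.
End YonedaTensor.

Theorem mainTheorem3 (M : Monoidal) (C D : Actegory M) (x : C) (u : D) :
  TambIso (Phi (@Yon M C D x u)) (TTensor (@Rx M C x) (@Lu M D u)).
Proof.
  exists (fun c d => requot (@tstep M C (selfAct M) D (Rx x) (Lu u) c d)).
  exists (fun c d => requot (@ostep M C D c d x u)).
  split; [|split; [|split]].
  - intros c d. apply requotK; [apply ostep_tstep | apply tstep_ostep].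
  - intros c d. apply requotK; [apply tstep_ostep | apply ostep_tstep].
  - intros a a' b b' f g. apply quot_ind; intros r.
    rewrite Phi_Yon_map_cls, !requot_cls, TTensor_map_cls by apply ostep_tstep.
    reflexivity.
  - intros m a b. apply quot_ind; intros r.
    rewrite Phi_Yon_str_cls, !requot_cls, TTensor_str_cls by apply ostep_tstep.
    reflexivity.
Qed.
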